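(* Let $n\ge1$ and let $\mathcal F$ be a collection of even-cardinality subsets of $[n]$ such that for every integer $r$ with $0\le r\le \lfloor n/2\rfloor$, the members of $\mathcal F$ of size $2r$ form the collection of bases of a sparse paving matroid with ground set $[n]$ and rank $2r$. Then $\mathcal F$ is the collection of feasible sets of a delta-matroid with ground set $[n]$.
   Context: A matroid is paving if it has no circuits of size strictly smaller than its rank, and sparse paving if both it and its dual are paving. A delta-matroid $(E,\mathcal F)$ consists of a finite ground set $E$ and a non-empty collection $\mathcal F$ of subsets of $E$ (the feasible sets) satisfying the symmetric exchange axiom: for all $X,Y\in\mathcal F$ and every $e\in X\triangle Y$ there exists $f\in X\triangle Y$ (possibly $f=e$) with $X\triangle\{e,f\}\in\mathcal F$. $[n]=\{1,\dots,n\}$. *)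

(* Matroids are given by their collections of bases,
   delta-matroids by their feasible sets, over a finite ground type T. *)
From HB Require Import structures.
From mathcomp Require Import all_boot.
Set Implicit Arguments. Unset Strict Implicit. Unset Printing Implicit Defensive.

Section Defs.
Variable T : finType.

Definition symdiff (X Y : {set T}) : {set T} := (X :\: Y) :|: (Y :\: X).

Definition is_matroid_bases (B : {set {set T}}) : Prop :=
  B != set0 /\
  forall X Y, X \in B -> Y \in B -> forall e, e \in X :\: Y ->
    exists2 f, f \in Y :\: X & (X :\ e) :|: [set f] \in B.

Definition matroid_bases_of_rank (B : {set {set T}}) (k : nat) : Prop :=
  is_matroid_bases B /\ forall X, X \in B -> #|X| = k.

Definition independent (B : {set {set T}}) (X : {set T}) : bool :=
  [exists Y in B, X \subset Y].

Definition circuit (B : {set {set T}}) (C : {set T}) : Prop :=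
  ~~ independent B C /\ forall D : {set T}, D \proper C -> independent B D.

Definition paving (B : {set {set T}}) (k : nat) : Prop :=
  forall C, circuit B C -> k <= #|C|.

Definition dual_bases (B : {set {set T}}) : {set {set T}} :=
  [set ~: X | X in B].

Definition sparse_paving_bases (B : {set {set T}}) (k : nat) : Prop :=
  matroid_bases_of_rank B k /\ paving B k /\ paving (dual_bases B) (#|T| - k).

Definition is_delta_matroid (F : {set {set T}}) : Prop :=
  F != set0 /\
  forall X Y, X \in F -> Y \in F -> forall e, e \in symdiff X Y ->
    exists2 f, f \in symdiff X Y & symdiff X [set e; f] \in F.

End Defs.

(* In a sparse paving matroid of rank k, of two k-sets differing in a single
   exchange at least one is a basis: their intersection is independent by
   paving, the complement of their union is co-independent by dual paving,
   and one basis exchange between the corresponding basis and cobasis lands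
   on one of the two sets.  Given X, Y in F and e in X (+) Y with
   |X (+) Y| >= 4, pigeonhole yields distinct f1, f2 in X (+) Y - e on the
   same side of X; the two even sets X (+) {e, f1} and X (+) {e, f2} then
   differ by one exchange and lie in one layer of F, so one of them is
   feasible.  When |X (+) Y| = 2, take f with X (+) {e, f} = Y. *)
From HB Require Import structures.
From mathcomp Require Import all_boot.
Set Implicit Arguments. Unset Strict Implicit. Unset Printing Implicit Defensive.

Section FinsetFacts.
Variable T : finType.
Implicit Types (A W X Y Z : {set T}) (e f : T).

Lemma subset_card_succ Z A :
  Z \subset A -> #|A| = #|Z|.+1 -> exists2 c, c \notin Z & A = c |: Z.
Proof.
move=> ZA cardA.
have /subsetPn [c cA cZ] : ~~ (A \subset Z).
  by apply: contraTN (leqnn #|A|) => /subset_leq_card; rewrite cardA ltnNge.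
exists c => //; apply/eqP; rewrite eq_sym eqEcard subUset sub1set cA ZA /=.
by rewrite cardsU1 cZ cardA.
Qed.

Lemma pigeonhole_bool (S : {set T}) (P : pred T) :
  2 < #|S| -> exists f1 f2, [/\ f1 \in S, f2 \in S, f1 != f2 & P f1 = P f2].
Proof.
case/card_gt2P => x [y [z [[xS yS zS] [xy yz zx]]]].
case Px: (P x); case Py: (P y); case Pz: (P z);
  solve [ by exists x, y; rewrite Px Py | by exists y, z; rewrite Py Pz
        | by exists z, x; rewrite Pz Px ].
Qed.

Lemma symdiffKr X Y : symdiff X (symdiff X Y) = Y.
Proof. by apply/setP => x; rewrite /symdiff !inE; case: (x \in X); case: (x \in Y). Qed.

Lemma symdiff1E W f : symdiff W [set f] = if f \in W then W :\ f else f |: W.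
Proof.
case fW: (f \in W); apply/setP => x; rewrite /symdiff !inE;
  case: (eqVneq x f) => [->|]; rewrite ?fW //=; by case: (x \in W).
Qed.

Lemma symdiff_set2 X e f :
  e != f -> symdiff X [set e; f] = symdiff (symdiff X [set e]) [set f].
Proof.
move=> ef; apply/setP => x; rewrite /symdiff !inE.
case: (eqVneq x e) => [->|_]; rewrite ?(negbTE ef) /=;
  by case: (_ \in X); case: (x == f).
Qed.

Lemma mem_symdiff1 X e f : f != e -> (f \in symdiff X [set e]) = (f \in X).
Proof. by move=> fe; rewrite /symdiff !inE (negbTE fe) /=; case: (f \in X). Qed.

Lemma odd_symdiff X Y : odd #|symdiff X Y| = odd #|X| (+) odd #|Y|.
Proof.
have disj : (X :\: Y) :&: (Y :\: X) = set0.
  by apply/setP => x; rewrite !inE; case: (x \in X); case: (x \in Y).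
rewrite /symdiff cardsU disj cards0 subn0.
rewrite -(cardsID Y X) -(cardsID X Y) setIC !oddD.
by case: (odd _); case: (odd _); case: (odd _).
Qed.
End FinsetFacts.

Section SparsePaving.
Variable T : finType.
Implicit Types (B : {set {set T}}) (Z : {set T}) (a b : T).

Lemma paving_small_independent B k Z :
  paving B k -> #|Z| < k -> independent B Z.
Proof.
move=> pavB smallZ; apply: contraT => depZ.
pose P (C : {set T}) := (C \subset Z) && ~~ independent B C.
have PZ : P Z by rewrite /P subxx depZ.
case: (arg_minnP (fun C : {set T} => #|C|) PZ) => C /andP[CZ depC] Cmin.
have circC : circuit B C.
  split=> // D DC; apply: contraT => depD.
  have := Cmin D; rewrite /P (subset_trans (proper_sub DC) CZ) depD => /(_ isT).
  by rewrite leqNgt proper_card.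
have := leq_trans (pavB _ circC) (subset_leq_card CZ).
by rewrite leqNgt smallZ.
Qed.

Lemma sparse_paving_exchange_pair B k Z a b :
  sparse_paving_bases B k -> #|Z|.+1 = k ->
  a \notin Z -> b \notin Z -> a != b -> (a |: Z \in B) || (b |: Z \in B).
Proof.
move=> [[[_ exB] cardB] [pavB pavB']] cardZ aZ bZ ab.
have /exists_inP [B0 B0B ZB0] : independent B Z.
  by apply: (paving_small_independent pavB); rewrite -cardZ.
have [c cZ B0E] := subset_card_succ ZB0 (etrans (cardB _ B0B) (esym cardZ)).
case: (eqVneq c a) => [<-|ca]; first by rewrite -B0E B0B.
case: (eqVneq c b) => [<-|cb]; first by rewrite -B0E B0B orbT.
set U := a |: (b |: Z).
have cardU : #|U| = k.+1 by rewrite !cardsU1 !inE negb_or ab aZ bZ -cardZ.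
have /exists_inP [_ /imsetP [D DB ->]] : independent (dual_bases B) (~: U).
  apply: (paving_small_independent pavB').
  by rewrite cardsCs setCK cardU ltn_sub2l // -cardU max_card.
rewrite setCS => DU.
have cD : c \in B0 :\: D.
  rewrite inE B0E setU11 andbT; apply/negP => /(subsetP DU).
  by rewrite !inE (negbTE ca) (negbTE cb) (negbTE cZ).
have [f /setDP [fD fB0]] := exB _ _ B0B DB c cD.
rewrite B0E setU1K // setUC.
move: fB0 (subsetP DU f fD); rewrite B0E !inE negb_or => /andP[_ /negbTE ->].
by rewrite orbF => /orP [] /eqP -> ->; rewrite ?orbT.
Qed.
End SparsePaving.

Section EvenSparsePavingFamily.
Variables (n : nat) (F : {set {set 'I_n}}).
Hypothesis layer_sparse_paving :
  forall r, r <= n./2 -> sparse_paving_bases [set X in F | #|X| == 2 * r] (2 * r).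
Implicit Types (W Z : {set 'I_n}) (a b f : 'I_n).

Lemma even_family_exchange_pair Z a b :
  odd #|Z| -> a \notin Z -> b \notin Z -> a != b ->
  (a |: Z \in F) || (b |: Z \in F).
Proof.
move=> oddZ aZ bZ ab.
have cardaZ : #|a |: Z| = #|Z|.+1 by rewrite cardsU1 aZ.
have layer2 : 2 * (#|Z|.+1)./2 = #|Z|.+1 by rewrite mul2n even_halfK //= negbK.
have r_le : (#|Z|.+1)./2 <= n./2.
  by apply: half_leq; rewrite -cardaZ; apply: leq_trans (max_card _) _; rewrite card_ord.
have := sparse_paving_exchange_pair (layer_sparse_paving r_le) _ aZ bZ ab.
rewrite layer2 !inE !cardsU1 aZ bZ eqxx !andbT; exact.
Qed.

Lemma odd_family_exchange_pair W f1 f2 :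
  odd #|W| -> f1 != f2 -> (f1 \in W) = (f2 \in W) ->
  (symdiff W [set f1] \in F) || (symdiff W [set f2] \in F).
Proof.
move=> oddW f12 sameW; rewrite !symdiff1E -sameW.
case f1W: (f1 \in W) => /=; last first.
  by apply: even_family_exchange_pair; rewrite // -?sameW f1W.
have f2W : f2 \in W :\ f1 by rewrite !inE eq_sym f12 -sameW.
have f1W' : f1 \in W :\ f2 by rewrite !inE f12.
have swap : W :\ f2 :\ f1 = W :\ f1 :\ f2 by rewrite !setDDl setUC.
rewrite -(setD1K f2W) -(setD1K f1W') swap orbC.
apply: even_family_exchange_pair; rewrite ?setD11 ?inE ?eqxx ?andbF //.
by move: oddW; rewrite (cardsD1 f1) f1W (cardsD1 f2 (W :\ f1)) f2W /= negbK.
Qed.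
End EvenSparsePavingFamily.

Theorem lemma4p1 (n : nat) (F : {set {set 'I_n}}) :
  1 <= n ->
  (forall X, X \in F -> ~~ odd #|X|) ->
  (forall r, r <= n./2 ->
     sparse_paving_bases [set X in F | #|X| == 2 * r] (2 * r)) ->
  is_delta_matroid F.
Proof.
move=> _ evenF layers; split.
  have [[[layer0 _] _] _] := layers 0 (leq0n _).
  by case/set0Pn: layer0 => X; rewrite inE => /andP [XF _]; apply/set0Pn; exists X.
move=> X Y XF YF e eD; set D := symdiff X Y in eD *.
have evenD : ~~ odd #|D| by rewrite odd_symdiff (negbTE (evenF _ XF)) (negbTE (evenF _ YF)).
have [D_small | D_large] := leqP #|D| 2.
  have /cards1P [f Df] : #|D :\ e| == 1.
    by move: evenD D_small; rewrite (cardsD1 e) eD; case: #|D :\ e| => [|[|[]]].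
  have DE : D = [set e; f] by rewrite -(setD1K eD) Df.
  by exists f; rewrite -?DE ?symdiffKr // DE !inE eqxx orbT.
have : 2 < #|D :\ e| by move: D_large evenD; rewrite (cardsD1 e) eD; case: #|D :\ e| => [|[|[]]].
case/(pigeonhole_bool (mem X)) => f1 [f2 [/setD1P [f1e f1D] /setD1P [f2e f2D] f12 sameX]].
have oddW : odd #|symdiff X [set e]| by rewrite odd_symdiff (negbTE (evenF _ XF)) cards1.
have := odd_family_exchange_pair layers oddW f12.
rewrite !mem_symdiff1 // => /(_ sameX) /orP [].
- by exists f1; rewrite // symdiff_set2 // eq_sym.
- by exists f2; rewrite // symdiff_set2 // eq_sym.
Qed.
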